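(* Under the direct FIFO mechanism, it is a subgame-perfect equilibrium for drivers to accept all dispatches, to join the queue if and only if its length is at most $\bar Q=n_\ell+\frac{w_\ell}{c}\sum_{i\in\mathcal L}\mu_i$, and after joining never to leave without a rider nor move to the tail. Moreover, this equilibrium is individually rational and envy-free: for all $Q\ge0$, $\pi(q,Q,\sigma^*,\sigma^* )\ge 0$ for all $q\in[0,Q]$, and $\pi(q_1,Q,\sigma^*,\sigma^* )\ge\pi(q_2,Q,\sigma^*,\sigma^* )$ whenever $0\le q_1\le q_2\le Q$, where $\sigma^*$ denotes this strategy.
   Context: Model: continuous time, non-atomic, stationary; one origin with a queue of drivers. Destinations $\mathcal L=\{1,\dots,\ell\}$, rider arrival rates $\mu_i>0$, driver arrival rate $\lambda>0$, net earnings $w_1>w_2>\dots>w_\ell\ge0$ (a driver not joining or leaving without a rider gets $0$), driver waiting cost $c>0$ per unit time; riders have patience $P\in\mathbb Z_{>0}$ (cancel after the $P$-th decline). Queue length $Q\ge0$, positions $q\in[0,Q]$, $q=0$ head. Mechanisms are transparent and flexible: drivers know $Q$ and their position, see destination and earnings before deciding, are never penalized, may decline without losing position, move to the tail at any time, and leave (or not join) at any time. Strategy $\sigma=(\alpha,\beta,\gamma)$: $\alpha(q,Q,i)$ = probability of accepting an offered trip to $i$; $\beta(q,Q)$ = probability of moving to the tail; $\gamma(q,Q)$ = probability of leaving without a rider (at $q=Q$: not joining). $\pi(q,Q,\sigma,\sigma')$ = expected continuation payoff (net earnings minus $c$ times future waiting time) of a driver at $q$, length $Q$, using $\sigma$ while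 all other current and future drivers use $\sigma'$. SPE: $\pi(q,Q,\sigma^*,\sigma^* )\ge\pi(q,Q,\sigma,\sigma^* )$ for all feasible $\sigma$, all $Q\ge0$, $q\in[0,Q]$. Notation: $n_1=0$, $n_i=\sum_{j=1}^{i-1}(w_j-w_i)\mu_j/c$ for $i\ge2$ (equivalently $n_i=\sum_{j=1}^{i-1}\frac{w_j-w_{j+1}}{c}\sum_{k=1}^j\mu_k$), and $\bar Q=\sum_i w_i\mu_i/c$. Direct FIFO mechanism: when the queue length is $Q\ge n_i$, a trip to location $i$ is offered first to the driver at position $n_i$ and, after each decline, to the next driver further down the queue (FIFO order starting at $n_i$); when $Q<n_i$, trips to $i$ are not dispatched. *)

(* Fluid ("non-atomic") ride-hailing queue model, direct FIFO mechanism.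
   Destinations are indexed 0-based: i = 0 .. ell-1 (paper's i+1).
   Positions q in [0,Q] measure the mass of drivers ahead (q = 0 is the head). *)
From Stdlib Require Import Reals List Arith.
Import ListNotations.
Open Scope R_scope.

(** Primitive data of the model (rider patience is kept as a separate binder
    in the theorem; it plays no role when all other drivers accept). *)
Record Model := {
  ell : nat;            (* number of destinations *)
  mu  : nat -> R;       (* rider arrival rate to destination i *)
  w   : nat -> R;       (* net earnings of a trip to destination i *)
  lam : R;              (* driver arrival rate *)
  c   : R               (* waiting cost per unit time *)
}.

Definition rsum (f : nat -> R) (k : nat) : R :=
  fold_right Rplus 0 (map f (seq 0 k)).

Definition nn (M : Model) (i : nat) : R :=
  rsum (fun j => (w M j - w M i) * mu M j / c M) i.

Definition Qbar (M : Model) : R :=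
  rsum (fun i => w M i * mu M i / c M) (ell M).

Definition Mcum (M : Model) (k : nat) : R := rsum (mu M) k.

(** Total rate of trips dispatched at positions strictly ahead of x
    (= speed at which a non-deviating position x advances toward the head),
    resp. at positions ahead of or at x. *)
Definition rate_lt (M : Model) (x : R) : R :=
  rsum (fun i => if Rlt_dec (nn M i) x then mu M i else 0) (ell M).
Definition rate_le (M : Model) (x : R) : R :=
  rsum (fun i => if Rle_dec (nn M i) x then mu M i else 0) (ell M).

(** Time needed by a driver who stays in the queue (no tail move) to advance
    from position a down to position b (0 <= b <= a): on the segment
    [n_k, n_(k+1)] (the last segment being [n_(ell-1), +oo)) the driver
    advances at speed Mcum (k+1) = total rate of the trips dispatched to
    the positions n_0 < ... < n_k ahead of him. *)
Definition seg_hi (M : Model) (a : R) (k : nat) : R :=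
  if Nat.ltb (S k) (ell M) then nn M (S k) else a.
Definition tau (M : Model) (a b : R) : R :=
  rsum (fun k => Rmax 0 (Rmin a (seg_hi M a k) - Rmax b (nn M k)) / Mcum M (S k))
       (ell M).

(** Environment: all other (current and future) drivers use sigma*, i.e.
    accept every dispatch, stay iff their position is <= Qbar (in particular
    a newly arriving driver joins iff the queue length is <= Qbar), never move
    to the tail.  Qenv t is the queue length at time t >= 0 (after drivers
    beyond Qbar have left at time 0).  It solves the (Filippov) fluid ODE
    dQ/dt = lam * [joining] - (rate of dispatched trips), with sliding at
    the points where the drift changes sign; env_vel x is its velocity. *)
Definition env_vel (M : Model) (x : R) : R :=
  if Rlt_dec x (Qbar M) then
    if Rlt_dec 0 (lam M - rate_le M x) then lam M - rate_le M x
    else if Rlt_dec 0 x then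
           (if Rlt_dec (lam M - rate_lt M x) 0 then lam M - rate_lt M x else 0)
         else 0
  else if Rlt_dec 0 x then
         (if Rlt_dec (lam M - rate_lt M x) 0 then lam M - rate_lt M x else 0)
       else 0.

Definition env_path (M : Model) (Q0 : R) (Qenv : R -> R) : Prop :=
  Qenv 0 = Rmin Q0 (Qbar M) /\
  (forall t, 0 < t -> continuity_pt Qenv t) /\
  (forall t, 0 <= t -> exists d, 0 < d /\
      forall u, t <= u <= t + d -> Qenv u = Qenv t + env_vel M (Qenv t) * (u - t)).

(** Behaviour of a single (measure-zero) deviating driver against that
    environment.  Since the environment is deterministic, a (pure) deviation
    is described by its realisation: a finite list of segments, each
    "advance from the current position a to position b (0 <= b <= a), wait
    e >= 0 more time units (only possible at the head b = 0, where the driver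
    does not move; every dispatch declined meanwhile keeps his position),
    then move to the tail", followed by a final segment ending with a
    terminal action: accept the trip to i (possible only when offered,
    i.e. at position b = n_i with queue length >= n_i) or leave without a
    rider.  Declining offers never changes the position. *)
Inductive action := Accept (i : nat) | Leave.

Record Plan := {
  moves : list (R * R);     (* segments (b, e) each followed by a tail move *)
  last_seg : R * R;
  act : action
}.

Definition seg_ok (a b e : R) : Prop :=
  0 <= b <= a /\ 0 <= e /\ (e <> 0 -> b = 0).

(** reach: starting at time t at position a, executing the segments leads to
    time t' and position a' (each segment ends with a move to the tail). *)
Fixpoint reach (M : Model) (Qenv : R -> R) (l : list (R * R))
         (t a t' a' : R) : Prop :=
  match l with
  | [] => t' = t /\ a' = a
  | (b, e) :: l' =>
      seg_ok a b e /\
      reach M Qenv l' (t + tau M a b + e) (Qenv (t + tau M a b + e)) t' a'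
  end.

(** Drivers ahead of him at positions > Qbar leave at
    time 0, so his effective initial position is min q Qbar. *)
Definition plan_value (M : Model) (Qenv : R -> R) (q : R) (pl : Plan) (v : R)
  : Prop :=
  exists t1 a1, reach M Qenv (moves pl) 0 (Rmin q (Qbar M)) t1 a1 /\
    seg_ok a1 (fst (last_seg pl)) (snd (last_seg pl)) /\
    (let b := fst (last_seg pl) in
     let T := t1 + tau M a1 b + snd (last_seg pl) in
     match act pl with
     | Accept i => (i < ell M)%nat /\ b = nn M i /\ nn M i <= Qenv T /\
                   v = w M i - c M * T
     | Leave => v = - (c M * T)
     end).

(** k*(q): index of the largest n_k <= q (the first trip offered to a driver
    at position q moving to the head). *)
Definition kstar (M : Model) (q : R) : nat :=
  pred (length (filter (fun i => if Rle_dec (nn M i) q then true else false)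
                       (seq 0 (ell M)))).

(** The realisation of sigma* for a driver at position q: if q <= Qbar stay,
    never move to the tail, accept the first offered trip (to k*(q), offered
    at position n_(k*(q))); if q > Qbar leave at once (for q = Q: don't join). *)
Definition sigma_star_plan (M : Model) (q : R) : Plan :=
  if Rle_dec q (Qbar M)
  then {| moves := []; last_seg := (nn M (kstar M q), 0); act := Accept (kstar M q) |}
  else {| moves := []; last_seg := (Qbar M, 0); act := Leave |}.

(** pi(q, Q, sigma-star, sigma-star); it does not depend on Q. *)
Definition pi_star (M : Model) (q : R) : R :=
  if Rle_dec q (Qbar M)
  then w M (kstar M q) - c M * tau M q (nn M (kstar M q))
  else 0.

From Stdlib Require Import Reals List Lra Lia Classical.
Open Scope R_scope.

(* For a driver who never deviates, let [head_time x] be the time needed to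
   advance from position x to the head.  The thresholds satisfy
   [c * head_time n_i = w_0 - w_i], so accepting the trip offered at n_i after
   elapsed time t from position a is worth [w_0 - c * (t + head_time a)]
   whatever i is; sigma* thus yields [w_0 - c * head_time q], which is
   nonincreasing in q and vanishes at Qbar.  Against the equilibrium
   environment the queue drains no faster than a staying driver advances, so
   [t + head_time (Q t)] is nondecreasing in t.  Tail moves and waiting only
   push a deviator back or keep him still, hence along any deviation
   [t + head_time (position)] never drops below its initial value
   [head_time q]: no trip, and a fortiori leaving, beats sigma*.  The same
   monotonicity shows that the trip sigma* waits for is still dispatched when
   the driver reaches its position. *)

Lemma fold_right_Rplus_init (l : list R) (z : R) :
  fold_right Rplus z l = fold_right Rplus 0 l + z.
Proof. induction l as [|x l IH]; simpl; [lra | rewrite IH; lra]. Qed.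

Lemma rsum_0 f : rsum f 0 = 0.
Proof. reflexivity. Qed.

Lemma rsum_S f n : rsum f (S n) = rsum f n + f n.
Proof.
  unfold rsum. rewrite seq_S, map_app, fold_right_app. simpl.
  rewrite fold_right_Rplus_init. lra.
Qed.

Lemma rsum_ext f g n : (forall i, (i < n)%nat -> f i = g i) -> rsum f n = rsum g n.
Proof.
  induction n; intros Hfg; [reflexivity|].
  rewrite !rsum_S, IHn, Hfg; auto; lia.
Qed.

Lemma rsum_le f g n : (forall i, (i < n)%nat -> f i <= g i) -> rsum f n <= rsum g n.
Proof.
  induction n; intros Hfg; [rewrite !rsum_0; lra|].
  rewrite !rsum_S.
  assert (f n <= g n) by (apply Hfg; lia).
  assert (rsum f n <= rsum g n) by (apply IHn; intros; apply Hfg; lia).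
  lra.
Qed.

Lemma rsum_const0 n : rsum (fun _ => 0) n = 0.
Proof. induction n; [reflexivity|]. rewrite rsum_S, IHn. lra. Qed.

Lemma rsum_ge0 f n : (forall i, (i < n)%nat -> 0 <= f i) -> 0 <= rsum f n.
Proof. intros Hf. rewrite <- (rsum_const0 n). exact (rsum_le _ _ n Hf). Qed.

Lemma rsum_minus f g n : rsum (fun i => f i - g i) n = rsum f n - rsum g n.
Proof. induction n; [rewrite !rsum_0; lra|]. rewrite !rsum_S, IHn. lra. Qed.

Lemma rsum_mulr f a n : rsum (fun i => f i * a) n = rsum f n * a.
Proof. induction n; [rewrite !rsum_0; lra|]. rewrite !rsum_S, IHn. lra. Qed.

Lemma rsum_shift (f g : nat -> R) (A C : R) n :
  rsum (fun j => (f j - A) * g j / C) n =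
  rsum (fun j => f j * g j / C) n - A / C * rsum g n.
Proof.
  induction n; [rewrite !rsum_0; unfold Rdiv; ring|].
  rewrite !rsum_S, IHn. unfold Rdiv; ring.
Qed.

Lemma rsum_only f n k : (k < n)%nat ->
  (forall i, (i < n)%nat -> i <> k -> f i = 0) -> rsum f n = f k.
Proof.
  induction n; intros Hk Hf; [lia|]. rewrite rsum_S.
  destruct (Nat.eq_dec k n) as [->|Hne].
  - rewrite (rsum_ext f (fun _ => 0)), rsum_const0; [lra|].
    intros; apply Hf; lia.
  - rewrite IHn, (Hf n); try lra; try lia. intros; apply Hf; lia.
Qed.

Lemma rsum_trunc f m n : (m <= n)%nat ->
  (forall i, (m <= i < n)%nat -> f i = 0) -> rsum f n = rsum f m.
Proof.
  induction n; intros Hm Hf.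
  - replace m with 0%nat by lia. reflexivity.
  - destruct (Nat.eq_dec m (S n)) as [->|Hne]; [reflexivity|].
    rewrite rsum_S, IHn, Hf; try lra; try lia. intros; apply Hf; lia.
Qed.

Lemma le_of_left_continuity (F : R -> R) (a t m : R) :
  continuity_pt F m -> t < m -> (forall v, t <= v < m -> a <= F v) -> a <= F m.
Proof.
  intros Hcont Htm Hleft.
  destruct (Rle_dec a (F m)) as [|Hlt]; [assumption|exfalso].
  unfold continuity_pt, continue_in, limit1_in, limit_in in Hcont; simpl in Hcont.
  destruct (Hcont (a - F m) ltac:(lra)) as [alp [Halp Hc]].
  set (v := Rmax t (m - alp / 2)).
  assert (Hv1 : t <= v) by apply Rmax_l.
  assert (Hv2 : m - alp / 2 <= v) by apply Rmax_r.
  assert (Hv3 : v < m) by (apply Rmax_lub_lt; lra).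
  assert (Hd : Rdist (F v) (F m) < a - F m).
  { apply Hc. split; [split; [exact I|lra]|]. unfold Rdist. rewrite Rabs_left; lra. }
  unfold Rdist in Hd. specialize (Hleft v ltac:(lra)).
  pose proof (Rle_abs (F v - F m)). lra.
Qed.

(* The supremum of the times up to which [F] stays above [F t] is reached by
   continuity and cannot be a right endpoint by local monotonicity. *)
Lemma nondecreasing_of_locally_nondecreasing (F : R -> R) :
  (forall t, 0 <= t -> exists d, 0 < d /\ forall u, t <= u <= t + d -> F t <= F u) ->
  (forall t, 0 < t -> continuity_pt F t) ->
  forall t s, 0 <= t -> t <= s -> F t <= F s.
Proof.
  intros Hloc Hcont t s Ht Hts.
  set (E := fun u => t <= u <= s /\ forall v, t <= v <= u -> F t <= F v).
  assert (Et : E t).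
  { split; [lra|]. intros v Hv. replace v with t by lra. lra. }
  assert (Hb : bound E) by (exists s; intros u [Hu _]; lra).
  destruct (completeness E Hb (ex_intro _ t Et)) as [m [Hub Hlub]].
  assert (Htm : t <= m) by (apply Hub, Et).
  assert (Hms : m <= s) by (apply Hlub; intros u [Hu _]; lra).
  assert (Hbelow : forall v, t <= v < m -> F t <= F v).
  { intros v Hv.
    assert (Hnub : ~ is_upper_bound E v) by (intro Hc; specialize (Hlub v Hc); lra).
    apply not_all_ex_not in Hnub as [u Hu].
    apply imply_to_and in Hu as [[_ Eu] Hu]. apply Eu. lra. }
  assert (Hm : F t <= F m).
  { destruct (Req_dec m t) as [->|Hne]; [lra|].
    apply (le_of_left_continuity F _ t); auto; [apply Hcont|]; lra. }
  assert (Hms' : m = s).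
  { destruct (Rle_dec s m); [lra|exfalso].
    destruct (Hloc m ltac:(lra)) as [d [Hd Hu]].
    set (u' := Rmin s (m + d)).
    assert (Eu' : E u').
    { split; [split; [apply Rmin_glb; lra | apply Rmin_l]|].
      intros v Hv. destruct (Rlt_dec v m); [apply Hbelow; lra|].
      assert (v <= m + d) by (pose proof (Rmin_r s (m + d)); unfold u' in Hv; lra).
      specialize (Hu v ltac:(lra)). lra. }
    specialize (Hub u' Eu').
    assert (m < u') by (apply Rmin_glb_lt; lra). lra. }
  subst m. exact Hm.
Qed.

Lemma lipschitz_continuity_pt (f : R -> R) (L z : R) :
  0 <= L -> (forall x y, Rabs (f y - f x) <= L * Rabs (y - x)) -> continuity_pt f z.
Proof.
  intros HL Hf. unfold continuity_pt, continue_in, limit1_in, limit_in; simpl.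
  intros eps Heps. exists (eps / (L + 1)). split; [apply Rdiv_lt_0_compat; lra|].
  intros x [_ Hx]. unfold Rdist in *.
  assert (L * Rabs (x - z) <= L * (eps / (L + 1))) by (apply Rmult_le_compat_l; lra).
  assert (L * (eps / (L + 1)) < eps).
  { apply (Rmult_lt_reg_r (L + 1)); [lra|].
    replace (L * (eps / (L + 1)) * (L + 1)) with (eps * L) by (field; lra). nra. }
  specialize (Hf z x). lra.
Qed.

Lemma filter_downward_closed (p : nat -> bool) n :
  (forall i j, (i <= j)%nat -> (j < n)%nat -> p j = true -> p i = true) ->
  exists m, (m <= n)%nat /\ filter p (seq 0 n) = seq 0 m.
Proof.
  induction n; intros Hp; [exists 0%nat; split; auto|].
  rewrite seq_S, filter_app. simpl. destruct (p n) eqn:Ep.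
  - exists (S n). split; auto. rewrite forallb_filter_id, seq_S; auto.
    apply forallb_forall. intros x Hx. apply in_seq in Hx. apply (Hp x n); auto; lia.
  - destruct IHn as [m [Hm Heq]]; [intros i j Hij Hj; apply Hp; lia|].
    exists m. split; [lia|]. rewrite Heq, app_nil_r. reflexivity.
Qed.

Ltac case_Rle := repeat match goal with
  | |- context [Rle_dec ?a ?b] => destruct (Rle_dec a b)
  | H : context [Rle_dec ?a ?b] |- _ => destruct (Rle_dec a b)
  end.

Ltac case_seg_hi M j :=
  let E := fresh "E" in
  unfold seg_hi; destruct (Nat.ltb (S j) (ell M)) eqn:E;
  [apply Nat.ltb_lt in E | apply Nat.ltb_ge in E].

Section FIFO.

Variable M : Model.
Hypothesis ell_pos : (1 <= ell M)%nat.
Hypothesis mu_pos : forall i, (i < ell M)%nat -> 0 < mu M i.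
Hypothesis w_decr : forall i j, (i < j)%nat -> (j < ell M)%nat -> w M j < w M i.
Hypothesis w_last_ge0 : 0 <= w M (ell M - 1).
Hypothesis lam_pos : 0 < lam M.
Hypothesis c_pos : 0 < c M.

Lemma Mcum_S_gt0 k : (k < ell M)%nat -> 0 < Mcum M (S k).
Proof.
  intros Hk. unfold Mcum. rewrite rsum_S.
  assert (0 <= rsum (mu M) k) by (apply rsum_ge0; intros; left; apply mu_pos; lia).
  specialize (mu_pos k Hk). lra.
Qed.

Lemma nn_0 : nn M 0 = 0.
Proof. reflexivity. Qed.

Lemma nn_S k : nn M (S k) = nn M k + (w M k - w M (S k)) / c M * Mcum M (S k).
Proof. unfold nn, Mcum. rewrite !rsum_S, !rsum_shift. unfold Rdiv; ring. Qed.

Lemma nn_S_gt k : (S k < ell M)%nat -> nn M k < nn M (S k).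
Proof.
  intros Hk. rewrite nn_S.
  pose proof (Mcum_S_gt0 k ltac:(lia)).
  assert (w M (S k) < w M k) by (apply w_decr; lia).
  assert (0 < (w M k - w M (S k)) / c M) by (apply Rdiv_lt_0_compat; lra).
  nra.
Qed.

Lemma nn_le i j : (i <= j)%nat -> (j < ell M)%nat -> nn M i <= nn M j.
Proof.
  intros Hij Hj. induction j as [|j IH].
  - replace i with 0%nat by lia. lra.
  - destruct (Nat.eq_dec i (S j)) as [->|Hne]; [lra|].
    specialize (IH ltac:(lia) ltac:(lia)). pose proof (nn_S_gt j Hj). lra.
Qed.

Lemma nn_ge0 k : (k < ell M)%nat -> 0 <= nn M k.
Proof. intros Hk. rewrite <- nn_0. apply nn_le; lia. Qed.

(* The last sum term vanishes, so the shifted sum over all destinations is n_(ell-1). *)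
Lemma Qbar_eq :
  Qbar M = nn M (ell M - 1) + w M (ell M - 1) / c M * rsum (mu M) (ell M).
Proof.
  set (L := (ell M - 1)%nat).
  assert (Hn : nn M L = rsum (fun j => (w M j - w M L) * mu M j / c M) (ell M)).
  { replace (ell M) with (S L) by (unfold L; lia).
    rewrite rsum_S. unfold nn. unfold Rdiv; ring. }
  rewrite Hn, rsum_shift. unfold Qbar. ring.
Qed.

Lemma nn_last_le_Qbar : nn M (ell M - 1) <= Qbar M.
Proof.
  rewrite Qbar_eq.
  assert (0 <= rsum (mu M) (ell M)) by (apply rsum_ge0; intros; left; apply mu_pos; lia).
  assert (0 <= w M (ell M - 1) / c M)
    by (unfold Rdiv; apply Rmult_le_pos; [lra | left; apply Rinv_0_lt_compat; lra]).
  nra.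
Qed.

Lemma Qbar_ge0 : 0 <= Qbar M.
Proof. pose proof nn_last_le_Qbar. pose proof (nn_ge0 (ell M - 1) ltac:(lia)). lra. Qed.

Lemma kstar_spec q : 0 <= q -> (kstar M q < ell M)%nat /\ nn M (kstar M q) <= q.
Proof.
  intros Hq. unfold kstar.
  set (p := fun i => if Rle_dec (nn M i) q then true else false).
  destruct (filter_downward_closed p (ell M)) as [m [Hm Heq]].
  { intros i j Hij Hj. unfold p. case_Rle; auto; try discriminate.
    pose proof (nn_le i j Hij Hj). lra. }
  rewrite Heq, length_seq.
  assert (H0 : In 0%nat (filter p (seq 0 (ell M)))).
  { apply filter_In. split; [apply in_seq; lia|].
    unfold p. rewrite nn_0. case_Rle; auto; lra. }
  rewrite Heq in H0. apply in_seq in H0.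
  assert (H1 : In (pred m) (filter p (seq 0 (ell M)))) by (rewrite Heq; apply in_seq; lia).
  apply filter_In in H1 as [H1 H2]. apply in_seq in H1.
  split; [lia|]. unfold p in H2. case_Rle; auto; discriminate.
Qed.

Lemma segment_of_pos x : 0 < x -> exists k, (k < ell M)%nat /\ nn M k < x /\
  ((S k < ell M)%nat -> x <= nn M (S k)).
Proof.
  intros Hx.
  assert (G : forall m, (m < ell M)%nat -> exists k, (k <= m)%nat /\ nn M k < x /\
             ((k < m)%nat -> x <= nn M (S k))).
  { induction m as [|m IH]; intros Hm.
    - exists 0%nat. rewrite nn_0. split; [lia|split; [lra|lia]].
    - destruct IH as [k [Hk1 [Hk2 Hk3]]]; [lia|].
      destruct (Nat.eq_dec k m) as [->|Hne].
      + destruct (Rlt_dec (nn M (S m)) x).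
        * exists (S m). split; [lia|split; [lra|lia]].
        * exists m. split; [lia|split; [lra|intros; lra]].
      + exists k. split; [lia|split; [lra|intros; apply Hk3; lia]]. }
  destruct (G (ell M - 1)%nat ltac:(lia)) as [k [Hk1 [Hk2 Hk3]]].
  exists k. split; [lia|split; [lra|intros; apply Hk3; lia]].
Qed.

Lemma rate_lt_le_Mcum x k : (k < ell M)%nat ->
  ((S k < ell M)%nat -> x <= nn M (S k)) -> rate_lt M x <= Mcum M (S k).
Proof.
  intros Hk Hx. unfold rate_lt.
  rewrite (rsum_trunc _ (S k) (ell M)); [|lia|].
  - unfold Mcum. apply rsum_le. intros i Hi.
    destruct (Rlt_dec (nn M i) x); [lra|]. left; apply mu_pos; lia.
  - intros i Hi. assert (nn M (S k) <= nn M i) by (apply nn_le; lia).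
    specialize (Hx ltac:(lia)). destruct (Rlt_dec (nn M i) x); [lra|auto].
Qed.

Definition head_time x := tau M x 0.

Lemma tau_eq_sub a b : 0 <= b <= a -> tau M a b = head_time a - head_time b.
Proof.
  intros Hab. unfold head_time, tau. rewrite <- rsum_minus. apply rsum_ext.
  intros j Hj. unfold Rdiv. rewrite <- Rmult_minus_distr_r. f_equal.
  pose proof (nn_ge0 j Hj). case_seg_hi M j.
  - pose proof (nn_S_gt j E). unfold Rmax, Rmin; case_Rle; lra.
  - unfold Rmax, Rmin; case_Rle; lra.
Qed.

Lemma head_time_le x y : x <= y -> head_time x <= head_time y.
Proof.
  intros Hxy. apply rsum_le. intros j Hj.
  pose proof (nn_ge0 j Hj). pose proof (Mcum_S_gt0 j Hj).
  unfold Rdiv. apply Rmult_le_compat_r; [left; apply Rinv_0_lt_compat; lra|].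
  case_seg_hi M j.
  - pose proof (nn_S_gt j E). unfold Rmax, Rmin; case_Rle; lra.
  - unfold Rmax, Rmin; case_Rle; lra.
Qed.

Lemma head_time_lipschitz x y : x <= y ->
  head_time y - head_time x <= (y - x) * rsum (fun j => / Mcum M (S j)) (ell M).
Proof.
  intros Hxy. unfold head_time, tau. rewrite <- rsum_minus.
  rewrite Rmult_comm, <- rsum_mulr. apply rsum_le. intros j Hj.
  pose proof (nn_ge0 j Hj). pose proof (Mcum_S_gt0 j Hj).
  unfold Rdiv. rewrite <- Rmult_minus_distr_r, (Rmult_comm (/ _) (y - x)).
  apply Rmult_le_compat_r; [left; apply Rinv_0_lt_compat; lra|].
  case_seg_hi M j.
  - pose proof (nn_S_gt j E). unfold Rmax, Rmin; case_Rle; lra.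
  - unfold Rmax, Rmin; case_Rle; lra.
Qed.

Lemma head_time_nonpos x : x <= 0 -> head_time x = 0.
Proof.
  intros Hx. rewrite <- (rsum_const0 (ell M)). apply rsum_ext. intros j Hj.
  pose proof (nn_ge0 j Hj).
  replace (Rmax 0 (Rmin x (seg_hi M x j) - Rmax 0 (nn M j))) with 0
    by (unfold Rmax, Rmin; case_Rle; lra).
  unfold Rdiv; ring.
Qed.

(* Only the k-th term of the sum defining [head_time] varies on this segment. *)
Lemma head_time_seg k x : (k < ell M)%nat -> nn M k <= x ->
  ((S k < ell M)%nat -> x <= nn M (S k)) ->
  head_time x = head_time (nn M k) + (x - nn M k) / Mcum M (S k).
Proof.
  intros Hk Hx1 Hx2.
  enough (head_time x - head_time (nn M k) = (x - nn M k) / Mcum M (S k)) by lra.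
  unfold head_time, tau. rewrite <- rsum_minus, (rsum_only _ _ k Hk).
  - unfold Rdiv. rewrite <- Rmult_minus_distr_r. f_equal.
    pose proof (nn_ge0 k Hk). case_seg_hi M k.
    + specialize (Hx2 E). unfold Rmax, Rmin; case_Rle; lra.
    + unfold Rmax, Rmin; case_Rle; lra.
  - intros j Hj Hne. unfold Rdiv. rewrite <- Rmult_minus_distr_r.
    enough (Rmax 0 (Rmin x (seg_hi M x j) - Rmax 0 (nn M j)) =
            Rmax 0 (Rmin (nn M k) (seg_hi M (nn M k) j) - Rmax 0 (nn M j)))
      as -> by ring.
    pose proof (nn_ge0 j Hj).
    destruct (Nat.lt_ge_cases j k).
    + assert (nn M (S j) <= nn M k) by (apply nn_le; lia).
      pose proof (nn_S_gt j ltac:(lia)).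
      case_seg_hi M j; [|lia]. unfold Rmax, Rmin; case_Rle; lra.
    + assert (nn M (S k) <= nn M j) by (apply nn_le; lia).
      specialize (Hx2 ltac:(lia)).
      case_seg_hi M j.
      * pose proof (nn_S_gt j E). unfold Rmax, Rmin; case_Rle; lra.
      * unfold Rmax, Rmin; case_Rle; lra.
Qed.

(* This is what the thresholds n_i are designed for: reaching the head from n_i
   costs exactly the earnings difference [w_0 - w_i]. *)
Lemma head_time_nn i : (i < ell M)%nat -> head_time (nn M i) = (w M 0 - w M i) / c M.
Proof.
  induction i as [|i IH]; intros Hi.
  - rewrite nn_0, head_time_nonpos by lra. field. lra.
  - pose proof (nn_S_gt i Hi).
    rewrite (head_time_seg i (nn M (S i))), IH, nn_S by (lia || lra).
    pose proof (Mcum_S_gt0 i ltac:(lia)). field. lra.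
Qed.

Lemma head_time_Qbar : head_time (Qbar M) = w M 0 / c M.
Proof.
  pose proof nn_last_le_Qbar as HQ.
  rewrite (head_time_seg (ell M - 1) (Qbar M)), head_time_nn by (lia || lra).
  pose proof (Mcum_S_gt0 (ell M - 1) ltac:(lia)).
  replace (S (ell M - 1)) with (ell M) in * by lia.
  rewrite Qbar_eq. unfold Mcum in *. field. lra.
Qed.

Lemma tau_ge0 a b : 0 <= b <= a -> 0 <= tau M a b.
Proof. intros Hb. rewrite tau_eq_sub by lra. pose proof (head_time_le b a). lra. Qed.

Lemma pi_star_eq q : 0 <= q <= Qbar M -> pi_star M q = w M 0 - c M * head_time q.
Proof.
  intros Hq. unfold pi_star. case_Rle; [|lra].
  destruct (kstar_spec q ltac:(lra)) as [Hk1 Hk2].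
  pose proof (nn_ge0 _ Hk1).
  rewrite tau_eq_sub, head_time_nn by (auto; lra). field. lra.
Qed.

Lemma pi_star_ge0 q : 0 <= q -> 0 <= pi_star M q.
Proof.
  intros Hq. destruct (Rle_dec q (Qbar M)) as [HqQ|HqQ].
  - rewrite pi_star_eq by lra.
    pose proof (head_time_le q (Qbar M) HqQ) as Hle. rewrite head_time_Qbar in Hle.
    apply Rmult_le_compat_l with (r := c M) in Hle; [|lra].
    replace (c M * (w M 0 / c M)) with (w M 0) in Hle by (field; lra). lra.
  - unfold pi_star. case_Rle; [contradiction|lra].
Qed.

Lemma pi_star_antitone q1 q2 : 0 <= q1 -> q1 <= q2 -> pi_star M q2 <= pi_star M q1.
Proof.
  intros Hq1 Hq12. destruct (Rle_dec q2 (Qbar M)) as [HqQ|HqQ].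
  - rewrite !pi_star_eq by lra.
    pose proof (head_time_le q1 q2 Hq12). nra.
  - replace (pi_star M q2) with 0; [apply pi_star_ge0; lra|].
    unfold pi_star. case_Rle; [contradiction|lra].
Qed.

(* [head_time] is flat on [x <= 0]; adding [Rmin x 0] makes the clock strictly
   increasing there, so no nonnegativity of the queue length is ever needed. *)
Definition head_clock x := head_time x + Rmin x 0.

Lemma head_clock_le x y : x <= y -> head_clock x <= head_clock y.
Proof.
  intros Hxy. unfold head_clock. pose proof (head_time_le x y Hxy).
  unfold Rmin; case_Rle; lra.
Qed.

Lemma head_clock_continuous z : continuity_pt head_clock z.
Proof.
  set (K := rsum (fun j => / Mcum M (S j)) (ell M)).
  assert (HK : 0 <= K).
  { apply rsum_ge0. intros j Hj. left; apply Rinv_0_lt_compat, Mcum_S_gt0, Hj. }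
  assert (Hstep : forall x y, x <= y ->
            0 <= head_clock y - head_clock x <= (K + 1) * (y - x)).
  { intros x y Hxy. pose proof (head_clock_le x y Hxy) as Hmono.
    pose proof (head_time_lipschitz x y Hxy) as Hlip. fold K in Hlip.
    unfold head_clock in *. unfold Rmin in *; case_Rle; nra. }
  apply (lipschitz_continuity_pt _ (K + 1)); [lra|]. intros x y.
  destruct (Rle_dec x y) as [Hxy|Hxy].
  - specialize (Hstep x y Hxy). rewrite !Rabs_right by lra. lra.
  - specialize (Hstep y x ltac:(lra)). rewrite !Rabs_left1 by lra. lra.
Qed.

Lemma head_clock_lt_nn k y : (k < ell M)%nat -> y < nn M k ->
  head_clock y < head_time (nn M k).
Proof.
  intros Hk Hy. destruct k as [|k].
  - rewrite nn_0 in *. unfold head_clock.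
    rewrite !head_time_nonpos by lra. rewrite Rmin_left; lra.
  - pose proof (nn_S_gt k Hk). pose proof (nn_ge0 k ltac:(lia)).
    set (z := Rmax y (nn M k)).
    assert (Hz1 : nn M k <= z) by apply Rmax_r.
    assert (Hz2 : z < nn M (S k)) by (apply Rmax_lub_lt; lra).
    assert (head_clock y <= head_clock z) by (apply head_clock_le, Rmax_l).
    assert (Hz : head_clock z = head_time z) by (unfold head_clock; rewrite Rmin_right; lra).
    rewrite (head_time_seg k z ltac:(lia) Hz1 ltac:(intros; lra)) in Hz.
    rewrite (head_time_seg k (nn M (S k)) ltac:(lia) ltac:(lra) ltac:(intros; lra)).
    pose proof (Mcum_S_gt0 k ltac:(lia)).
    assert ((z - nn M k) / Mcum M (S k) < (nn M (S k) - nn M k) / Mcum M (S k)).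
    { unfold Rdiv. apply Rmult_lt_compat_r; [apply Rinv_0_lt_compat|]; lra. }
    lra.
Qed.

Lemma env_vel_ge0_or_drain x : 0 <= env_vel M x \/
  (0 < x /\ env_vel M x = lam M - rate_lt M x /\ lam M - rate_lt M x < 0).
Proof.
  unfold env_vel.
  repeat match goal with |- context [Rlt_dec ?a ?b] => destruct (Rlt_dec a b) end;
  (left; lra) || (right; auto).
Qed.

(* The queue shrinks at most at the rate [rate_lt] at which a staying driver
   at its tail advances, i.e. by at most one unit of [head_time] per unit of time. *)
Lemma queue_clock_locally_nondecreasing (Qenv : R -> R) t d :
  0 < d ->
  (forall u, t <= u <= t + d -> Qenv u = Qenv t + env_vel M (Qenv t) * (u - t)) ->
  exists d', 0 < d' /\ forall u, t <= u <= t + d' ->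
     t + head_clock (Qenv t) <= u + head_clock (Qenv u).
Proof.
  intros Hd Hlin. set (x := Qenv t) in *. set (v := env_vel M x) in *.
  destruct (env_vel_ge0_or_drain x) as [Hv | [Hx [Hv Hneg]]]; fold v in Hv.
  - exists d. split; [lra|]. intros u Hu. rewrite (Hlin u Hu).
    assert (head_clock x <= head_clock (x + v * (u - t))) by (apply head_clock_le; nra).
    lra.
  - destruct (segment_of_pos x Hx) as [k [Hk [Hk1 Hk2]]].
    set (d' := Rmin d ((x - nn M k) / - v)).
    assert (Hd'1 : d' <= d) by apply Rmin_l.
    assert (Hd'2 : d' <= (x - nn M k) / - v) by apply Rmin_r.
    assert (0 < d') by (apply Rmin_glb_lt; [|apply Rdiv_lt_0_compat]; lra).
    exists d'. split; [lra|]. intros u Hu.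
    rewrite (Hlin u ltac:(lra)). set (h := u - t).
    assert (Hh : - v * h <= x - nn M k).
    { assert (- v * h <= - v * ((x - nn M k) / - v)) by (unfold h; nra).
      replace (- v * ((x - nn M k) / - v)) with (x - nn M k) in * by (field; lra). lra. }
    set (y := x + v * h).
    assert (Hy1 : nn M k <= y) by (unfold y; lra).
    assert (Hy2 : y <= x) by (unfold y, h; nra).
    pose proof (nn_ge0 k Hk).
    assert (Ex : head_clock x = head_time x) by (unfold head_clock; rewrite Rmin_right; lra).
    assert (Ey : head_clock y = head_time y) by (unfold head_clock; rewrite Rmin_right; lra).
    rewrite Ex, Ey, (head_time_seg k x Hk ltac:(lra) Hk2),
      (head_time_seg k y Hk Hy1 ltac:(intros Hs; specialize (Hk2 Hs); lra)).
    pose proof (Mcum_S_gt0 k Hk) as Hm. set (m := Mcum M (S k)) in *.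
    pose proof (rate_lt_le_Mcum x k Hk Hk2) as Hr. fold m in Hr.
    enough ((x - nn M k) / m - (y - nn M k) / m <= h) by (unfold h in *; lra).
    replace ((x - nn M k) / m - (y - nn M k) / m) with (- v * h / m)
      by (unfold y; field; lra).
    apply (Rmult_le_reg_r m); [lra|].
    replace (- v * h / m * m) with (- v * h) by (field; lra).
    assert (0 <= h) by (unfold h; lra). assert (- v <= m) by lra. nra.
Qed.

Lemma queue_clock_bound Q0 q (Qenv : R -> R) : 0 <= q <= Q0 -> env_path M Q0 Qenv ->
  forall s, 0 <= s -> head_time (Rmin q (Qbar M)) <= s + head_clock (Qenv s).
Proof.
  intros Hq [H0 [Hcont Hlin]] s Hs.
  pose proof Qbar_ge0.
  assert (Hstart : head_time (Rmin q (Qbar M)) <= 0 + head_clock (Qenv 0)).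
  { rewrite H0. unfold head_clock. rewrite (Rmin_right (Rmin Q0 _)) by (apply Rmin_glb; lra).
    enough (head_time (Rmin q (Qbar M)) <= head_time (Rmin Q0 (Qbar M))) by lra.
    apply head_time_le. unfold Rmin; case_Rle; lra. }
  enough (0 + head_clock (Qenv 0) <= s + head_clock (Qenv s)) by lra.
  apply (nondecreasing_of_locally_nondecreasing (fun u => u + head_clock (Qenv u)));
    [| |lra|lra].
  - intros t Ht. destruct (Hlin t Ht) as [d [Hd Hu]].
    exact (queue_clock_locally_nondecreasing Qenv t d Hd Hu).
  - intros t Ht. change (continuity_pt (plus_fct id (comp head_clock Qenv)) t).
    apply continuity_pt_plus; [apply derivable_continuous_pt, derivable_pt_id|].
    apply continuity_pt_comp; [apply Hcont, Ht|apply head_clock_continuous].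
Qed.

Lemma pi_star_eq_min q : 0 <= q -> pi_star M q = w M 0 - c M * head_time (Rmin q (Qbar M)).
Proof.
  intros Hq. pose proof Qbar_ge0. unfold Rmin. case_Rle.
  - apply pi_star_eq. lra.
  - rewrite head_time_Qbar. unfold pi_star. case_Rle; [contradiction|]. field. lra.
Qed.

Lemma reach_clock (Qenv : R -> R) X l : forall t a t' a',
  reach M Qenv l t a t' a' -> 0 <= t -> X <= t + head_clock a ->
  (forall s, 0 <= s -> X <= s + head_clock (Qenv s)) ->
  0 <= t' /\ X <= t' + head_clock a'.
Proof.
  induction l as [|[b e] l IH]; intros t a t' a' Hr Ht HX Henv; simpl in Hr.
  - destruct Hr as [-> ->]. auto.
  - destruct Hr as [[Hb [He _]] Hr]. pose proof (tau_ge0 a b Hb).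
    apply (IH _ _ _ _ Hr); [lra|apply Henv; lra|exact Henv].
Qed.

Section Clock.

Variables (Qenv : R -> R) (q : R).
Hypothesis q_ge0 : 0 <= q.
Hypothesis clock_bound :
  forall s, 0 <= s -> head_time (Rmin q (Qbar M)) <= s + head_clock (Qenv s).

(* The accepted trip is still dispatched when reached: otherwise the queue would
   have drained past n_k faster than the driver advanced. *)
Lemma sigma_star_plan_value : plan_value M Qenv q (sigma_star_plan M q) (pi_star M q).
Proof.
  pose proof Qbar_ge0.
  unfold plan_value, sigma_star_plan. destruct (Rle_dec q (Qbar M)) as [HqQ|HqQ];
    exists 0, (Rmin q (Qbar M)); simpl; (split; [auto|]).
  - rewrite Rmin_left in * by lra.
    destruct (kstar_spec q q_ge0) as [Hk1 Hk2]. set (k := kstar M q) in *.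
    pose proof (nn_ge0 k Hk1).
    split; [unfold seg_ok; repeat split; lra|].
    split; [exact Hk1|]. split; [reflexivity|].
    set (u := 0 + tau M q (nn M k) + 0).
    assert (Hu : u = head_time q - head_time (nn M k))
      by (unfold u; rewrite tau_eq_sub by lra; lra).
    assert (Hu0 : 0 <= u) by (unfold u; pose proof (tau_ge0 q (nn M k)); lra).
    split.
    + destruct (Rle_dec (nn M k) (Qenv u)) as [|Hlt]; [assumption|].
      pose proof (clock_bound u Hu0).
      pose proof (head_clock_lt_nn k (Qenv u) Hk1 ltac:(lra)). lra.
    + unfold pi_star. case_Rle; [|contradiction]. fold k. unfold u. ring.
  - rewrite Rmin_right in * by lra.
    split; [unfold seg_ok; repeat split; lra|].
    rewrite tau_eq_sub by lra. unfold pi_star. case_Rle; [contradiction|]. ring.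
Qed.

(* Every state (t, a) a deviation can reach satisfies [X <= t + head_clock a],
   and accepting the trip to i at position n_i costs exactly [w_0 - w_i] of
   waiting, so no trip is worth more than [w_0 - c X = pi_star q]. *)
Lemma plan_value_le_pi_star pl v : plan_value M Qenv q pl v -> v <= pi_star M q.
Proof.
  intros [t1 [a1 [Hr [Hs Hact]]]].
  destruct pl as [mv [b e] ac]; simpl in *.
  set (X := head_time (Rmin q (Qbar M))) in *.
  pose proof Qbar_ge0.
  assert (Hq0 : 0 <= Rmin q (Qbar M)) by (apply Rmin_glb; lra).
  assert (HX0 : X <= 0 + head_clock (Rmin q (Qbar M)))
    by (unfold X, head_clock; rewrite (Rmin_right (Rmin _ _)); lra).
  destruct (reach_clock Qenv X mv 0 _ t1 a1 Hr ltac:(lra) HX0 clock_bound) as [Ht1 HX1].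
  destruct Hs as [Hb [He _]].
  assert (Ha1 : head_clock a1 = head_time a1)
    by (unfold head_clock; rewrite Rmin_right; lra).
  rewrite pi_star_eq_min by exact q_ge0. fold X.
  destruct ac as [i|].
  - destruct Hact as [Hi [Hbi [_ Hv]]]. subst v b.
    rewrite tau_eq_sub, head_time_nn by (auto; lra).
    replace (w M i - c M * (t1 + (head_time a1 - (w M 0 - w M i) / c M) + e))
      with (w M 0 - c M * (t1 + head_time a1 + e)) by (field; lra).
    assert (c M * X <= c M * (t1 + head_time a1 + e)) by (apply Rmult_le_compat_l; lra).
    lra.
  - subst v. pose proof (tau_ge0 a1 b ltac:(lra)).
    pose proof (pi_star_ge0 q q_ge0) as Hpi.
    rewrite pi_star_eq_min in Hpi by exact q_ge0. fold X in Hpi.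
    assert (0 <= c M * (t1 + tau M a1 b + e)) by (apply Rmult_le_pos; lra).
    lra.
Qed.

End Clock.

End FIFO.

Theorem theorem1 (M : Model) (P : nat) :
  (1 <= ell M)%nat ->
  (forall i, (i < ell M)%nat -> 0 < mu M i) ->
  (forall i j, (i < j)%nat -> (j < ell M)%nat -> w M j < w M i) ->
  0 <= w M (ell M - 1) ->
  0 < lam M ->
  0 < c M ->
  (0 < P)%nat ->
  Qbar M = nn M (ell M - 1) + w M (ell M - 1) / c M * rsum (mu M) (ell M) /\
  (forall Q0 q (Qenv : R -> R), 0 <= q <= Q0 -> env_path M Q0 Qenv ->
     plan_value M Qenv q (sigma_star_plan M q) (pi_star M q) /\
     (forall pl v, plan_value M Qenv q pl v -> v <= pi_star M q)) /\
  (forall Q0 q, 0 <= Q0 -> 0 <= q <= Q0 -> 0 <= pi_star M q) /\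
  (forall Q0 q1 q2, 0 <= q1 -> q1 <= q2 -> q2 <= Q0 -> pi_star M q2 <= pi_star M q1).
Proof.
  intros Hell Hmu Hw HwL Hlam Hc _.
  split; [exact (Qbar_eq M Hell)|].
  split; [|split].
  - intros Q0 q Qenv Hq Henv.
    pose proof (queue_clock_bound M Hell Hmu Hw HwL Hlam Hc Q0 q Qenv Hq Henv) as Hbound.
    split.
    + exact (sigma_star_plan_value M Hell Hmu Hw HwL Hc Qenv q (proj1 Hq) Hbound).
    + exact (plan_value_le_pi_star M Hell Hmu Hw HwL Hc Qenv q (proj1 Hq) Hbound).
  - intros Q0 q _ Hq. exact (pi_star_ge0 M Hell Hmu Hw HwL Hc q (proj1 Hq)).
  - intros Q0 q1 q2 Hq1 Hq12 _. exact (pi_star_antitone M Hell Hmu Hw HwL Hc q1 q2 Hq1 Hq12).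
Qed.
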